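(* Let $\mathcal{U}=[k]$ be finite, let $\{\mathbf{p}_u\}_{u\in\mathcal{U}}$ be a probability table with every $\mathbf{p}_u\in(0,1)^n$ and $\sum_i p_u^{(i)}=1$, let $d$ be a probability distribution on $\mathcal{U}$, and let $f_d(C^{(i)},C^{(j)})=\sum_{u}d(u)\,\frac{p_u^{(i)}}{p_u^{(i)}+p_u^{(j)}}$ for distinct $i,j$. For every cycle $\mathcal{C}=(c_1,\dots,c_\ell)$ of $\ell\ge3$ pairwise distinct indices in $[n]$, $$1<f_d(C^{(c_\ell)},C^{(c_1)})+\sum_{i=1}^{\ell-1}f_d(C^{(c_i)},C^{(c_{i+1})})<\ell-1.$$
   Context: $C^{(1)},\dots,C^{(n)}$ are class labels; $f_d$ are the overall opinions (edge-weights of the expert graph generated by the probability table and $d$); the displayed sum is the curl of the expert graph along $\mathcal{C}$. *)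

From mathcomp Require Import all_boot all_order all_algebra.
Set Implicit Arguments. Unset Strict Implicit. Unset Printing Implicit Defensive.
Import Order.TTheory GRing.Theory Num.Theory.
Local Open Scope ring_scope.

Definition prob_table (R : realFieldType) (k n : nat) (p : 'I_k -> 'I_n -> R) :=
  (forall u i, 0 < p u i < 1) /\ (forall u, \sum_(i < n) p u i = 1).

Definition prob_dist (R : realFieldType) (k : nat) (d : 'I_k -> R) :=
  (forall u, 0 <= d u) /\ \sum_(u < k) d u = 1.

Definition f_d (R : realFieldType) (k n : nat) (p : 'I_k -> 'I_n -> R)
  (d : 'I_k -> R) (i j : 'I_n) : R :=
  \sum_(u < k) d u * (p u i / (p u i + p u j)).

(* Curl along the cycle c_1,...,c_l (c : 'I_l -> 'I_n, 0-indexed): 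
   sum_{i<l} f_d(c_i, c_{(i+1) mod l}), which is the sum of the l-1 consecutive
   terms plus the closing term f_d(c_l, c_1). *)
Definition cycle_curl (R : realFieldType) (k n l : nat) (p : 'I_k -> 'I_n -> R)
  (d : 'I_k -> R) (c : nat -> 'I_n) : R :=
  \sum_(0 <= i < l) f_d p d (c i) (c ((i + 1) %% l)%N).

From mathcomp Require Import all_boot all_order all_algebra.
From mathcomp Require Import zify.
Set Implicit Arguments. Unset Strict Implicit. Unset Printing Implicit Defensive.
Import Order.TTheory GRing.Theory Num.Theory.
Local Open Scope ring_scope.

(* For a single expert with positive weights x_1, ..., x_l along the cycle, every
   denominator x_i + x_(i+1) is strictly smaller than the total weight T (as l >= 3),
   so sum_i x_i / (x_i + x_(i+1)) > sum_i x_i / T = 1; the same argument with the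
   numerators x_(i+1) shows that the complementary sum, which adds up with the first
   one to l, also exceeds 1.  Averaging these bounds over the experts with the
   probability distribution d keeps them strict. *)

Lemma val_ordS l (i : 'I_l) : val (ordS i) = if i.+1 == l then 0%N else i.+1.
Proof.
rewrite /=; case: eqP => [->|ne]; first exact: modnn.
by rewrite modn_small //; have := ltn_ord i; lia.
Qed.

Lemma ordS_neq l (i : 'I_l) : (1 < l)%N -> ordS i != i.
Proof.
move=> l_gt1; apply/eqP => /(congr1 val).
by rewrite val_ordS /=; have := ltn_ord i; case: eqP; lia.
Qed.

Lemma ordSS_neq l (i : 'I_l) : (2 < l)%N -> ordS (ordS i) != i.
Proof.
move=> l_gt2; apply/eqP => /(congr1 val).
by rewrite !val_ordS /=; have := ltn_ord i; do 2 case: eqP; lia.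
Qed.

Section Ratios.

Variable R : realFieldType.

Lemma sum_ratio_gt1 (I : finType) (i0 : I) (a b : I -> R) :
  (forall i, 0 < a i) -> (forall i, 0 < b i < \sum_j a j) ->
  1 < \sum_i a i / b i.
Proof.
move=> a_gt0 b_bounds; set A := \sum_j a j.
have A_gt0 : 0 < A by have /andP[b0 bA] := b_bounds i0; exact: lt_trans bA.
have -> : 1 = \sum_i a i / A by rewrite -mulr_suml divff // gt_eqF.
apply: ltr_sum => [|i _]; first by apply/hasP; exists i0; rewrite ?mem_index_enum.
have /andP[b_gt0 bA] := b_bounds i.
by rewrite ltr_pM2l // ltf_pV2.
Qed.

Variable l : nat.

Definition expert_curl (y : 'I_l -> R) := \sum_(i < l) y i / (y i + y (ordS i)).

Hypothesis l_ge3 : (3 <= l)%N.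
Variable x : 'I_l -> R.
Hypothesis x_gt0 : forall i, 0 < x i.

Let l_gt1 : (1 < l)%N := ltnW l_ge3.
Let i0 : 'I_l := Ordinal (ltnW l_gt1).

Lemma adjacent_lt_sum i : x i + x (ordS i) < \sum_j x j.
Proof.
have Si_neq := ordS_neq i l_gt1.
have SSi_neq := ordSS_neq i l_ge3.
have SSi_neqS := ordS_neq (ordS i) l_gt1.
rewrite (bigD1 i) //= (bigD1 (ordS i)) //= addrA ltrDl.
rewrite (bigD1 (ordS (ordS i))) /=; last by rewrite SSi_neq SSi_neqS.
by apply: ltr_pwDl => //; apply: sumr_ge0 => j _; exact: ltW.
Qed.

Lemma expert_curl_gt1 : 1 < expert_curl x.
Proof.
apply: sum_ratio_gt1 i0 _ _ x_gt0 _ => i.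
by rewrite adjacent_lt_sum andbT addr_gt0.
Qed.

Lemma expert_curl_lt : expert_curl x < l%:R - 1.
Proof.
have co_gt1 : 1 < \sum_(i < l) x (ordS i) / (x i + x (ordS i)).
  apply: sum_ratio_gt1 i0 _ _ (fun i => x_gt0 (ordS i)) _ => i.
  have sum_ordS : \sum_j x (ordS j) = \sum_j x j.
    by rewrite [RHS](reindex_inj (@ordS_inj l)).
  by rewrite sum_ordS adjacent_lt_sum andbT addr_gt0.
have sum_l : expert_curl x + \sum_(i < l) x (ordS i) / (x i + x (ordS i)) = l%:R.
  rewrite /expert_curl -big_split /= -[l in RHS]card_ord -sumr_const.
  by apply: eq_bigr => i _; rewrite -mulrDl divff // gt_eqF // addr_gt0.
by rewrite -sum_l -addrA ltrDl subr_gt0.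
Qed.

End Ratios.

Section WeightedAverage.

Variables (R : realFieldType) (I : finType) (d : I -> R).
Hypotheses (d_ge0 : forall u, 0 <= d u) (d_sum1 : \sum_u d u = 1).

Lemma wavg_gt (a : R) (g : I -> R) : (forall u, a < g u) -> a < \sum_u d u * g u.
Proof.
move=> a_lt_g.
have : \sum_u d u != 0 by rewrite d_sum1 oner_neq0.
rewrite psumr_neq0 // => /hasP[u0 _ du0].
have terms_ge0 u : true -> 0 <= d u * (g u - a).
  by rewrite mulr_ge0 // subr_ge0 ltW.
rewrite -subr_gt0 -[a]mul1r -d_sum1 mulr_suml -sumrB.
under eq_bigr do rewrite -mulrBr.
rewrite lt0r sumr_ge0 // andbT psumr_neq0 //.
by apply/hasP; exists u0; rewrite ?mem_index_enum // mulr_gt0 // subr_gt0.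
Qed.

Lemma wavg_lt (b : R) (g : I -> R) : (forall u, g u < b) -> \sum_u d u * g u < b.
Proof.
move=> g_lt_b; rewrite -ltrN2 -sumrN.
under eq_bigr do rewrite -mulrN.
by apply: wavg_gt => u; rewrite ltrN2.
Qed.

End WeightedAverage.

Lemma cycle_curlE (R : realFieldType) k n l (p : 'I_k -> 'I_n -> R) d c :
  cycle_curl l p d c = \sum_(u < k) d u * expert_curl (fun i : 'I_l => p u (c i)).
Proof.
rewrite /cycle_curl big_mkord /f_d exchange_big /=; apply: eq_bigr => u _.
by rewrite mulr_sumr; apply: eq_bigr => i _; rewrite addn1.
Qed.

Theorem corollary1 (R : realFieldType) (k n l : nat)
  (p : 'I_k -> 'I_n -> R) (d : 'I_k -> R) (c : nat -> 'I_n) :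
  prob_table p -> prob_dist d ->
  (3 <= l)%N ->
  (forall i j, (i < l)%N -> (j < l)%N -> c i = c j -> i = j) ->
  1 < cycle_curl l p d c < (l%:R - 1).
Proof.
move=> [p_bounds _] [d_ge0 d_sum1] l_ge3 _.
have x_gt0 u (i : 'I_l) : 0 < p u (c i) by have /andP[] := p_bounds u (c i).
rewrite cycle_curlE; apply/andP; split.
- by apply: wavg_gt => // u; exact: expert_curl_gt1.
- by apply: wavg_lt => // u; exact: expert_curl_lt.
Qed.
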